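(* Let $\{(\mathbf{z}_{ni},v_{ni},\epsilon_{ni})\}$ be a triangular array satisfying: within rows iid mean zero; $E[\mathbf{z}_{ni}\epsilon_{ni}]=\mathbf{0}$, $E[\mathbf{z}_{ni}v_{ni}]=\mathbf{0}$, $E[\epsilon_{ni}v_{ni}]=\tau/\sqrt{n}$; uniformly bounded $(4+\eta)$-th moments of $\mathbf{z}_{ni},\epsilon_{ni},v_{ni}$; $E[\mathbf{z}_{ni}\mathbf{z}_{ni}']\to Q>0$, $E[v_{ni}^2]\to\sigma_v^2>0$, $E[\epsilon_{ni}^2]\to\sigma_\epsilon^2>0$; $E[\epsilon_{ni}^2\mathbf{z}_{ni}\mathbf{z}_{ni}']-E[\epsilon_{ni}^2]E[\mathbf{z}_{ni}\mathbf{z}_{ni}']\to0$, $E[\epsilon_{ni}^2v_{ni}\mathbf{z}_{ni}']-E[\epsilon_{ni}^2]E[v_{ni}\mathbf{z}_{ni}']\to0$, $E[\epsilon_{ni}^2v_{ni}^2]-E[\epsilon_{ni}^2]E[v_{ni}^2]\to0$; $x_{ni}=\mathbf{z}_{ni}'\boldsymbol{\pi}+v_{ni}$, $\boldsymbol{\pi}\neq\mathbf{0}$, $y_{ni}=\beta x_{ni}+\epsilon_{ni}$. Then FMSC selection between the OLS and TSLS estimators is equivalent to a Durbin-Hausman-Wu pre-test with critical value $2$: the FMSC rule selects OLS (i.e.\ $\widehat{T}_{FMSC}<2$) if and only if $\widehat{T}_{DHW}<2$.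
   Context: $\widehat{\beta}_{OLS}=(\mathbf{x}'\mathbf{x})^{-1}\mathbf{x}'\mathbf{y}$, $\widetilde{\beta}_{TSLS}=(\mathbf{x}'P_Z\mathbf{x})^{-1}\mathbf{x}'P_Z\mathbf{y}$, $P_Z=Z(Z'Z)^{-1}Z'$. Estimators: $\widehat{\sigma}_x^2=n^{-1}\mathbf{x}'\mathbf{x}$, $\widehat{\gamma}^2=n^{-1}\mathbf{x}'Z(Z'Z)^{-1}Z'\mathbf{x}$, $\widehat{\sigma}_v^2=\widehat{\sigma}_x^2-\widehat{\gamma}^2$, $\widehat{\sigma}_\epsilon^2=n^{-1}(\mathbf{y}-\mathbf{x}\widetilde{\beta}_{TSLS})'(\mathbf{y}-\mathbf{x}\widetilde{\beta}_{TSLS})$, $\widehat{\tau}=n^{-1/2}\mathbf{x}'(\mathbf{y}-\mathbf{x}\widetilde{\beta}_{TSLS})$, $\widehat{V}=\widehat{\sigma}_v^2\widehat{\sigma}_\epsilon^2\widehat{\sigma}_x^2/\widehat{\gamma}^2$. The FMSC rule chooses OLS iff $\widehat{T}_{FMSC}=\widehat{\tau}^2/\widehat{V}<2$ (otherwise TSLS). The Durbin-Hausman-Wu statistic is $\widehat{T}_{DHW}=n(\widehat{\beta}_{OLS}-\widetilde{\beta}_{TSLS})^2/[\widehat{\sigma}_\epsilon^2(1/\widehat{\gamma}^2-1/\widehat{\sigma}_x^2)]$, and the DHW pre-test with critical value $2$ uses OLS unless $\widehat{T}_{DHW}\ge2$. *)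

From HB Require Import structures.
From mathcomp Require Import all_boot all_order all_algebra.
From mathcomp Require Import reals.
Set Implicit Arguments. Unset Strict Implicit. Unset Printing Implicit Defensive.
Import Order.TTheory GRing.Theory Num.Theory.
Local Open Scope ring_scope.

Section FMSC.
Variable R : realType.
Variables n p : nat.

Definition dot (u v : 'cV[R]_n) : R := (u^T *m v) 0 0.

Definition PZ (Z : 'M[R]_(n, p)) : 'M[R]_n := Z *m invmx (Z^T *m Z) *m Z^T.

Definition beta_OLS (x y : 'cV[R]_n) : R := (dot x x)^-1 * dot x y.

Definition beta_TSLS (Z : 'M[R]_(n, p)) (x y : 'cV[R]_n) : R :=
  (dot x (PZ Z *m x))^-1 * dot x (PZ Z *m y).

Definition sigma_x2 (x : 'cV[R]_n) : R := n%:R^-1 * dot x x.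
Definition gamma2 (Z : 'M[R]_(n, p)) (x : 'cV[R]_n) : R :=
  n%:R^-1 * dot x (PZ Z *m x).
Definition sigma_v2 Z x : R := sigma_x2 x - gamma2 Z x.

Definition resid Z (x y : 'cV[R]_n) : 'cV[R]_n := y - beta_TSLS Z x y *: x.

Definition sigma_eps2 Z (x y : 'cV[R]_n) : R :=
  n%:R^-1 * dot (resid Z x y) (resid Z x y).
Definition tau_hat Z (x y : 'cV[R]_n) : R :=
  (Num.sqrt n%:R)^-1 * dot x (resid Z x y).
Definition V_hat Z (x y : 'cV[R]_n) : R :=
  sigma_v2 Z x * sigma_eps2 Z x y * sigma_x2 x / gamma2 Z x.

Definition T_FMSC Z (x y : 'cV[R]_n) : R := tau_hat Z x y ^+ 2 / V_hat Z x y.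

Definition T_DHW Z (x y : 'cV[R]_n) : R :=
  n%:R * (beta_OLS x y - beta_TSLS Z x y) ^+ 2 /
  (sigma_eps2 Z x y * ((gamma2 Z x)^-1 - (sigma_x2 x)^-1)).

End FMSC.

Inductive estimator := OLS | TSLS.

Definition fmsc_select (R : realType) n p (Z : 'M[R]_(n, p)) (x y : 'cV[R]_n)
  : estimator := if T_FMSC Z x y < 2 then OLS else TSLS.

Definition dhw_select (R : realType) n p (Z : 'M[R]_(n, p)) (x y : 'cV[R]_n)
  : estimator := if 2 <= T_DHW Z x y then TSLS else OLS.

From HB Require Import structures.
From mathcomp Require Import all_boot all_order all_algebra.
From mathcomp Require Import reals.
From mathcomp Require Import ring.
Import Order.TTheory GRing.Theory Num.Theory.
Local Open Scope ring_scope.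

(* With a = x'x, g = x'P_Z x and s = sigma_eps2, both statistics reduce to
   (x'y - beta_TSLS a)^2 g / (s a (a - g)) as soon as g != 0, because the
   TSLS residual gives sqrt n tau_hat = x'y - beta_TSLS a = a (beta_OLS - beta_TSLS).
   When g = 0, the division by zero makes T_FMSC = 0 while T_DHW <= 0, so both
   rules pick OLS. *)

Section DotProduct.
Variables (R : realType) (n : nat).
Implicit Types u w : 'cV[R]_n.

Lemma dot_self u : dot u u = \sum_i u i 0 ^+ 2.
Proof. by rewrite /dot mxE; apply: eq_bigr => i _; rewrite mxE expr2. Qed.

Lemma dot_self_ge0 u : 0 <= dot u u.
Proof. by rewrite dot_self; apply: sumr_ge0 => i _; apply: sqr_ge0. Qed.

Lemma dot_self_eq0 u : dot u u = 0 -> u = 0.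
Proof.
rewrite dot_self => u0; apply/matrixP => i j; rewrite (ord1 j) mxE.
have /eqP := psumr_eq0P (fun i _ => sqr_ge0 (u i 0)) u0 (i:=i) isT.
by rewrite sqrf_eq0 => /eqP.
Qed.

Lemma dot0l w : dot 0 w = 0.
Proof. by rewrite /dot trmx0 mul0mx mxE. Qed.

Lemma dotBZr u w (c : R) : dot u (w - c *: u) = dot u w - c * dot u u.
Proof. by rewrite /dot mulmxBr -scalemxAr !mxE. Qed.

End DotProduct.

Section Statistics.
Variables (R : realType) (n p : nat).
Variables (Z : 'M[R]_(n, p)) (x y : 'cV[R]_n).
Hypothesis n_gt0 : (0 < n)%N.

Let n_neq0 : (n%:R : R) != 0. Proof. by rewrite pnatr_eq0 -lt0n. Qed.

Lemma sigma_x2_ge0 : 0 <= sigma_x2 x.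
Proof. by rewrite mulr_ge0 ?invr_ge0 ?dot_self_ge0. Qed.

Lemma sigma_eps2_ge0 : 0 <= sigma_eps2 Z x y.
Proof. by rewrite mulr_ge0 ?invr_ge0 ?dot_self_ge0. Qed.

Lemma T_FMSC_gamma2_eq0 : dot x (PZ Z *m x) = 0 -> T_FMSC Z x y = 0.
Proof. by move=> g0; rewrite /T_FMSC /V_hat /gamma2 g0 !(mulr0, invr0). Qed.

Lemma T_DHW_gamma2_eq0 : dot x (PZ Z *m x) = 0 -> T_DHW Z x y <= 0.
Proof.
move=> g0; rewrite /T_DHW /gamma2 g0 mulr0 invr0 sub0r mulrN invrN mulrN.
rewrite oppr_le0 mulr_ge0 ?(mulr_ge0 (ler0n _ _) (sqr_ge0 _)) // invr_ge0.
by rewrite mulr_ge0 ?invr_ge0 ?sigma_eps2_ge0 ?sigma_x2_ge0.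
Qed.

Lemma T_FMSC_eq_T_DHW : dot x (PZ Z *m x) != 0 -> T_FMSC Z x y = T_DHW Z x y.
Proof.
move=> g0.
have a0 : dot x x != 0.
  by apply: contraNneq g0 => /dot_self_eq0 ->; rewrite dot0l.
rewrite /T_FMSC /T_DHW /tau_hat /V_hat /sigma_v2 /gamma2 /sigma_x2 /beta_OLS.
rewrite /resid dotBZr exprMn exprVn sqr_sqrtr ?ler0n //.
move: a0 g0; set a := dot x x; set g := dot x _ => a0 g0.
set s := sigma_eps2 Z x y.
have [->|s0] := eqVneq s 0; first by rewrite !(mulr0, mul0r, invr0).
have [ag|ag] := eqVneq a g; first by rewrite ag !subrr !(mulr0, mul0r, invr0).
field; rewrite n_neq0 a0 g0 s0 subr_eq0 ag /= andbT.
have -> : n%:R * a + 1 *- n * g = n%:R * (a - g) by rewrite mulrBr mulNr.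
by rewrite mulf_neq0 // subr_eq0.
Qed.

Lemma T_FMSC_lt2E : (T_FMSC Z x y < 2) = (T_DHW Z x y < 2).
Proof.
have [g0|g0] := eqVneq (dot x (PZ Z *m x)) 0; last by rewrite T_FMSC_eq_T_DHW.
by rewrite T_FMSC_gamma2_eq0 // ltr0n (le_lt_trans (T_DHW_gamma2_eq0 g0)).
Qed.

End Statistics.

Theorem theorem6 (R : realType) (n p : nat) (Z : 'M[R]_(n, p))
    (pi : 'cV[R]_p) (v eps x y : 'cV[R]_n) (beta : R) :
  (0 < n)%N -> (0 < p)%N ->
  Z^T *m Z \in unitmx ->
  pi != 0 ->
  x = Z *m pi + v ->
  y = beta *: x + eps ->
  fmsc_select Z x y = dhw_select Z x y /\
  (fmsc_select Z x y = OLS <-> T_DHW Z x y < 2).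
Proof.
move=> n_gt0 _ _ _ _ _.
rewrite /fmsc_select /dhw_select T_FMSC_lt2E // leNgt.
by case: (T_DHW Z x y < 2).
Qed.
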